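(* Let $G$ be a multiplicative Lie algebra with $G\cong E/\mathcal Z(E)$ for some multiplicative Lie algebra $E$. If $\mathcal Z(E\otimes E)=(\mathcal Z(E)\otimes E)(E\otimes\mathcal Z(E))$, then $G\otimes G$ is Lie capable.
   Context: A multiplicative Lie algebra is a group $(G,\cdot)$ with a binary operation $\star$ such that for all $x,y,z\in G$: $x\star x=1$; $x\star(yz)=(x\star y)\,{}^y(x\star z)$; $(xy)\star z={}^x(y\star z)(x\star z)$; $((x\star y)\star{}^yz)((y\star z)\star{}^zx)((z\star x)\star{}^xy)=1$; ${}^z(x\star y)={}^zx\star{}^zy$, where ${}^xy=xyx^{-1}$. $Z(G)$ is the group center, $LZ(G)=\{x: x\star y=1\ \forall y\}$, $\mathcal Z(G)=LZ(G)\cap Z(G)$. $G$ is Lie capable if $G\cong E/\mathcal Z(E)$ for some multiplicative Lie algebra $E$. The tensor square $G\otimes G$ is the multiplicative Lie algebra generated by symbols $x\otimes y$ ($x,y\in G$) subject to, for all $x,x',y,y'\in G$: $x\otimes(yy')=(x\otimes y)({}^yx\otimes{}^yy')$; $(xx')\otimes y=({}^xx'\otimes{}^xy)(x\otimes y)$; $((x\star x')\otimes{}^{x'}y)({}^yx\otimes(x'\star y))^{-1}({}^xx'\otimes(x\star y)^{-1})^{-1}=1$; $({}^{y'}x\otimes(y\star y'))((y\star x)^{-1}\otimes{}^yy')^{-1}((y'\star x)\otimes{}^xy)^{-1}=1$; and $(x\otimes y)\star(x'\otimes y')=(y\star x)^{-1}\otimes(x'\star y')$. For an ideal $I$ of $E$,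 $I\otimes E$ (resp. $E\otimes I$) denotes the subgroup of $E\otimes E$ generated by all $a\otimes b$ with $a\in I,b\in E$ (resp. $a\in E,b\in I$). *)

Record mla := Mla {
  car :> Type;
  mul : car -> car -> car;
  one : car;
  inv : car -> car;
  star : car -> car -> car;
  mulA : forall x y z, mul x (mul y z) = mul (mul x y) z;
  mul1g : forall x, mul one x = x;
  mulg1 : forall x, mul x one = x;
  mulVg : forall x, mul (inv x) x = one;
  mulgV : forall x, mul x (inv x) = one;
  (* left conjugation  ^x y = x y x^{-1} is written inline below *)
  star_xx : forall x, star x x = one;
  star_mulr : forall x y z,
    star x (mul y z) = mul (star x y) (mul (mul y (star x z)) (inv y));
  star_mull : forall x y z,
    star (mul x y) z = mul (mul (mul x (star y z)) (inv x)) (star x z);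
  star_jacobi : forall x y z,
    mul (mul (star (star x y) (mul (mul y z) (inv y)))
             (star (star y z) (mul (mul z x) (inv z))))
        (star (star z x) (mul (mul x y) (inv x))) = one;
  star_conj : forall x y z,
    mul (mul z (star x y)) (inv z)
    = star (mul (mul z x) (inv z)) (mul (mul z y) (inv z))
}.

Arguments mul {m} _ _.
Arguments one {m}.
Arguments inv {m} _.
Arguments star {m} _ _.

Definition conj {G : mla} (x y : G) : G := mul (mul x y) (inv x).

Definition center (G : mla) (x : G) : Prop := forall y : G, mul x y = mul y x.
Definition lie_center (G : mla) (x : G) : Prop := forall y : G, star x y = one.
Definition calZ (G : mla) (x : G) : Prop := lie_center G x /\ center G x.

Definition mla_hom (G H : mla) (f : G -> H) : Prop :=
  (forall x y, f (mul x y) = mul (f x) (f y)) /\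
  (forall x y, f (star x y) = star (f x) (f y)).

(** [G ≅ E / 𝒵(E)]: there is a surjective homomorphism E -> G whose kernel
    is exactly 𝒵(E) (first isomorphism theorem form). *)
Definition iso_quot_calZ (G E : mla) : Prop :=
  exists f : E -> G, mla_hom E G f /\ (forall y : G, exists x : E, f x = y) /\
    (forall x : E, f x = one <-> calZ E x).

Definition lie_capable (G : mla) : Prop := exists E : mla, iso_quot_calZ G E.

(** The defining relations of the tensor square, for a map
    g : G x G -> M  (g x y plays the role of x ⊗ y). *)
Definition tensor_rels (G M : mla) (g : G -> G -> M) : Prop :=
  (forall x y y' : G,
     g x (mul y y') = mul (g x y) (g (conj y x) (conj y y'))) /\
  (forall x x' y : G,
     g (mul x x') y = mul (g (conj x x') (conj x y)) (g x y)) /\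
  (forall x x' y : G,
     mul (mul (g (star x x') (conj x' y)) (inv (g (conj y x) (star x' y))))
         (inv (g (conj x x') (inv (star x y)))) = one) /\
  (forall x y y' : G,
     mul (mul (g (conj y' x) (star y y')) (inv (g (inv (star y x)) (conj y y'))))
         (inv (g (star y' x) (conj x y))) = one) /\
  (forall x y x' y' : G,
     star (g x y) (g x' y') = g (inv (star y x)) (star x' y')).

(** (T, t) is the tensor square G ⊗ G: the multiplicative Lie algebra
    presented by generators x ⊗ y subject to the relations above, i.e. the
    initial object: t satisfies the relations and every map g into a
    multiplicative Lie algebra satisfying them factors uniquely through a
    homomorphism T -> M. *)
Definition is_tensor_square (G T : mla) (t : G -> G -> T) : Prop :=
  tensor_rels G T t /\
  forall (M : mla) (g : G -> G -> M), tensor_rels G M g ->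
    exists h : T -> M, mla_hom T M h /\ (forall x y, h (t x y) = g x y) /\
      forall h' : T -> M, mla_hom T M h' -> (forall x y, h' (t x y) = g x y) ->
        forall z, h' z = h z.

Inductive gen_subgroup (G : mla) (S : G -> Prop) : G -> Prop :=
  | gen_in : forall x, S x -> gen_subgroup G S x
  | gen_one : gen_subgroup G S one
  | gen_mul : forall x y, gen_subgroup G S x -> gen_subgroup G S y ->
                gen_subgroup G S (mul x y)
  | gen_inv : forall x, gen_subgroup G S x -> gen_subgroup G S (inv x).

(** (I ⊗ E)(E ⊗ J) : the subgroup of E ⊗ E generated by all a ⊗ b with
    a ∈ I, or with b ∈ J (the join of the two generated subgroups). *)
Definition tensor_prod_sub (E T : mla) (t : E -> E -> T)
  (I J : E -> Prop) : T -> Prop :=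
  gen_subgroup T (fun z => exists a b, z = t a b /\ (I a \/ J b)).

(* Let p : E -> G be the quotient map with kernel Z(E). The induced map
   p ⊗ p : E ⊗ E -> G ⊗ G kills Z(E ⊗ E), because by hypothesis that subgroup
   is generated by tensors with a factor in Z(E), and these are sent to
   tensors with a trivial factor. Conversely, modulo Z(E ⊗ E) the tensor a ⊗ b
   only depends on p a and p b, so it defines a tensor map of G into
   (E ⊗ E)/Z(E ⊗ E); by the universal property of G ⊗ G this yields an inverse
   of the map (E ⊗ E)/Z(E ⊗ E) -> G ⊗ G induced by p ⊗ p. Hence
   G ⊗ G ≅ (E ⊗ E)/Z(E ⊗ E). *)

From Stdlib Require Import FunctionalExtensionality PropExtensionality ProofIrrelevance IndefiniteDescription.

Section GroupLemmas.
Variable G : mla.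
Implicit Types x y z : G.

Lemma mulgI x y z : mul x y = mul x z -> y = z.
Proof.
  intros H.
  rewrite <- (mul1g G y), <- (mul1g G z), <- (mulVg G x), <- !mulA, H.
  reflexivity.
Qed.

Lemma mulIg x y z : mul y x = mul z x -> y = z.
Proof.
  intros H.
  rewrite <- (mulg1 G y), <- (mulg1 G z), <- (mulgV G x), !mulA, H.
  reflexivity.
Qed.

Lemma invg_unique x y : mul x y = one -> x = inv y.
Proof. intros H. apply (mulIg y). rewrite H, mulVg. reflexivity. Qed.

Lemma invgK x : inv (inv x) = x.
Proof. symmetry. apply invg_unique, mulgV. Qed.

Lemma invMg x y : inv (mul x y) = mul (inv y) (inv x).
Proof.
  symmetry. apply invg_unique.
  rewrite <- mulA, (mulA _ (inv x)), mulVg, mul1g, mulVg. reflexivity.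
Qed.

Lemma invg1 : inv (@one G) = one.
Proof. symmetry. apply invg_unique, mul1g. Qed.

Lemma mulKVg x y : mul x (mul (inv x) y) = y.
Proof. rewrite mulA, mulgV, mul1g. reflexivity. Qed.

Lemma mulg_idl x y : mul x y = y -> x = one.
Proof. intros H. apply (mulIg y). rewrite mul1g. exact H. Qed.

Lemma mulg_idr x y : mul x y = x -> y = one.
Proof. intros H. apply (mulgI x). rewrite mulg1. exact H. Qed.

Lemma conj1g y : conj one y = y.
Proof. unfold conj. rewrite invg1, mul1g, mulg1. reflexivity. Qed.

Lemma conjg_eq1 x y : conj x y = one -> y = one.
Proof.
  unfold conj. intros H. apply invg_unique in H. rewrite invgK in H.
  exact (mulg_idr x y H).
Qed.

Lemma star1g z : star one z = one.
Proof.
  pose proof (star_mull G one one z) as H.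
  rewrite !mul1g, invg1, mulg1 in H.
  exact (mulg_idr _ _ (eq_sym H)).
Qed.

Lemma calZ1 : calZ G one.
Proof.
  split; intro y.
  - apply star1g.
  - rewrite mul1g, mulg1. reflexivity.
Qed.

Lemma calZM x y : calZ G x -> calZ G y -> calZ G (mul x y).
Proof.
  intros [Lx Cx] [Ly Cy]. split; intro z.
  - rewrite star_mull, Ly, Lx, !mulg1, mulgV. reflexivity.
  - rewrite <- mulA, Cy, mulA, Cx, mulA. reflexivity.
Qed.

Lemma calZV x : calZ G x -> calZ G (inv x).
Proof.
  intros [Lx Cx]. split; intro z.
  - pose proof (star_mull G x (inv x) z) as H.
    rewrite mulgV, star1g, Lx, mulg1 in H.
    exact (conjg_eq1 _ _ (eq_sym H)).
  - apply (mulgI x).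
    rewrite mulA, mulgV, mul1g, mulA, Cx, <- mulA, mulgV, mulg1. reflexivity.
Qed.

Lemma star_calZr x m : calZ G m -> star x m = one.
Proof.
  intros [Lm Cm].
  pose proof (star_xx G (mul x m)) as H.
  rewrite star_mull, Lm, mulg1, mulgV, mul1g, star_mulr, star_xx, mul1g in H.
  exact (conjg_eq1 _ _ H).
Qed.

Lemma conj_calZ x c : calZ G c -> conj x c = c.
Proof.
  intros [_ Cc]. unfold conj. rewrite <- Cc, <- mulA, mulgV, mulg1. reflexivity.
Qed.

Lemma star_mulZl x n z : calZ G n -> star (mul x n) z = star x z.
Proof.
  intros [Ln _]. rewrite star_mull, Ln, mulg1, mulgV, mul1g. reflexivity.
Qed.

Lemma star_mulZr x y m : calZ G m -> star x (mul y m) = star x y.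
Proof.
  intros Hm. rewrite star_mulr, (star_calZr x m Hm), mulg1, mulgV, mulg1.
  reflexivity.
Qed.

End GroupLemmas.

Section Homomorphisms.
Context {G H : mla} {f : G -> H} (hf : mla_hom G H f).

Lemma hom_mul x y : f (mul x y) = mul (f x) (f y).
Proof. apply (proj1 hf). Qed.

Lemma hom_star x y : f (star x y) = star (f x) (f y).
Proof. apply (proj2 hf). Qed.

Lemma hom_one : f one = one.
Proof. apply (mulg_idr H (f one)). rewrite <- hom_mul, mul1g. reflexivity. Qed.

Lemma hom_inv x : f (inv x) = inv (f x).
Proof. apply invg_unique. rewrite <- hom_mul, mulVg. apply hom_one. Qed.

Lemma hom_conj x y : f (conj x y) = conj (f x) (f y).
Proof. unfold conj. rewrite !hom_mul, hom_inv. reflexivity. Qed.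

End Homomorphisms.

Lemma hom_comp {G H K : mla} {f : G -> H} {g : H -> K} :
  mla_hom G H f -> mla_hom H K g ->
  mla_hom G K (fun x => g (f x)).
Proof.
  intros hf hg. split; intros x y.
  - rewrite (hom_mul hf), (hom_mul hg). reflexivity.
  - rewrite (hom_star hf), (hom_star hg). reflexivity.
Qed.

Lemma hom_id (G : mla) : mla_hom G G (fun x => x).
Proof. split; reflexivity. Qed.

Lemma surj_section {A B : Type} (p : A -> B) :
  (forall y, exists x, p x = y) -> exists s : B -> A, forall y, p (s y) = y.
Proof.
  intros p_surj.
  exists (fun y => proj1_sig (constructive_indefinite_description _ (p_surj y))).
  intro y. exact (proj2_sig (constructive_indefinite_description _ (p_surj y))).
Qed.

Lemma surj_factor2 {A B C : Type} (p : A -> B) (f : A -> A -> C) :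
  (forall y, exists x, p x = y) ->
  (forall a a' b b', p a = p a' -> p b = p b' -> f a b = f a' b') ->
  exists g : B -> B -> C, forall a b, g (p a) (p b) = f a b.
Proof.
  intros p_surj f_fib. destruct (surj_section p p_surj) as [s ps].
  exists (fun x y => f (s x) (s y)). intros a b. apply f_fib; apply ps.
Qed.

Lemma hom_factor (T Q M : mla) (q : T -> Q) (h : T -> M) :
  mla_hom T Q q -> (forall u, exists x, q x = u) ->
  mla_hom T M h -> (forall x, q x = one -> h x = one) ->
  exists phi : Q -> M, mla_hom Q M phi /\ forall x, phi (q x) = h x.
Proof.
  intros hq q_surj hh ker_qh. destruct (surj_section q q_surj) as [s qs].
  assert (h_fib : forall x y, q x = q y -> h x = h y).
  { intros x y Hxy.
    assert (Hq : q (mul (inv x) y) = one)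
      by (rewrite (hom_mul hq), (hom_inv hq), Hxy; apply mulVg).
    rewrite <- (mulKVg T x y), (hom_mul hh), (ker_qh _ Hq), mulg1. reflexivity. }
  assert (phi_q : forall x, h (s (q x)) = h x) by (intro x; apply h_fib, qs).
  exists (fun u => h (s u)). split; [split|exact phi_q]; intros u v;
    destruct (q_surj u) as [x <-]; destruct (q_surj v) as [y <-].
  - rewrite <- (hom_mul hq), !phi_q. apply (hom_mul hh).
  - rewrite <- (hom_star hq), !phi_q. apply (hom_star hh).
Qed.

Section Quotient.
Variables (T : mla) (r : T -> T -> Prop).
Hypotheses (r_refl : forall x, r x x) (r_sym : forall x y, r x y -> r y x)
  (r_trans : forall x y z, r x y -> r y z -> r x z).
Hypotheses (r_mul : forall x x' y y', r x x' -> r y y' -> r (mul x y) (mul x' y'))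
  (r_inv : forall x x', r x x' -> r (inv x) (inv x'))
  (r_star : forall x x' y y', r x x' -> r y y' -> r (star x y) (star x' y')).

(* Classes are encoded as predicates on T, so that quotienting only needs
   propositional and functional extensionality. *)
Definition quot_car : Type := {P : T -> Prop | exists x, P = r x}.

Definition quot_class (x : T) : quot_car := exist _ (r x) (ex_intro _ x eq_refl).

Definition quot_repr (u : quot_car) : T :=
  proj1_sig (constructive_indefinite_description _ (proj2_sig u)).

Lemma quot_classK u : quot_class (quot_repr u) = u.
Proof.
  unfold quot_repr. destruct (constructive_indefinite_description _ _) as [x Hx].
  destruct u as [P HP]. apply subset_eq_compat. simpl in *. congruence.
Qed.

Lemma quot_class_eq x y : quot_class x = quot_class y <-> r x y.
Proof.
  split; intro H.
  - apply (f_equal (@proj1_sig _ _)) in H. simpl in H.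
    rewrite H. apply r_refl.
  - apply subset_eq_compat. extensionality z. apply propositional_extensionality.
    split; intro H'; eauto.
Qed.

Lemma quot_class_surj u : exists x, quot_class x = u.
Proof. exists (quot_repr u). apply quot_classK. Qed.

Lemma quot_reprK x : r (quot_repr (quot_class x)) x.
Proof. apply quot_class_eq, quot_classK. Qed.

Definition quot_mul u v := quot_class (mul (quot_repr u) (quot_repr v)).
Definition quot_star u v := quot_class (star (quot_repr u) (quot_repr v)).
Definition quot_inv u := quot_class (inv (quot_repr u)).
Definition quot_one := quot_class one.

Lemma quot_mul_class x y : quot_mul (quot_class x) (quot_class y) = quot_class (mul x y).
Proof. apply quot_class_eq, r_mul; apply quot_reprK. Qed.

Lemma quot_star_class x y : quot_star (quot_class x) (quot_class y) = quot_class (star x y).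
Proof. apply quot_class_eq, r_star; apply quot_reprK. Qed.

Lemma quot_inv_class x : quot_inv (quot_class x) = quot_class (inv x).
Proof. apply quot_class_eq, r_inv, quot_reprK. Qed.

Ltac quot_lift ax :=
  intros;
  repeat match goal with u : quot_car |- _ => destruct (quot_class_surj u) as [? <-] end;
  unfold quot_one;
  repeat first [rewrite quot_mul_class | rewrite quot_star_class | rewrite quot_inv_class];
  f_equal; apply ax.

Lemma quot_mulA : forall u v w, quot_mul u (quot_mul v w) = quot_mul (quot_mul u v) w.
Proof. quot_lift mulA. Qed.
Lemma quot_mul1g : forall u, quot_mul quot_one u = u.
Proof. quot_lift mul1g. Qed.
Lemma quot_mulg1 : forall u, quot_mul u quot_one = u.
Proof. quot_lift mulg1. Qed.
Lemma quot_mulVg : forall u, quot_mul (quot_inv u) u = quot_one.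
Proof. quot_lift mulVg. Qed.
Lemma quot_mulgV : forall u, quot_mul u (quot_inv u) = quot_one.
Proof. quot_lift mulgV. Qed.
Lemma quot_star_xx : forall u, quot_star u u = quot_one.
Proof. quot_lift star_xx. Qed.
Lemma quot_star_mulr : forall u v w,
  quot_star u (quot_mul v w)
  = quot_mul (quot_star u v) (quot_mul (quot_mul v (quot_star u w)) (quot_inv v)).
Proof. quot_lift star_mulr. Qed.
Lemma quot_star_mull : forall u v w,
  quot_star (quot_mul u v) w
  = quot_mul (quot_mul (quot_mul u (quot_star v w)) (quot_inv u)) (quot_star u w).
Proof. quot_lift star_mull. Qed.
Lemma quot_star_jacobi : forall u v w,
  quot_mul (quot_mul
      (quot_star (quot_star u v) (quot_mul (quot_mul v w) (quot_inv v)))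
      (quot_star (quot_star v w) (quot_mul (quot_mul w u) (quot_inv w))))
    (quot_star (quot_star w u) (quot_mul (quot_mul u v) (quot_inv u))) = quot_one.
Proof. quot_lift star_jacobi. Qed.
Lemma quot_star_conj : forall u v w,
  quot_mul (quot_mul w (quot_star u v)) (quot_inv w)
  = quot_star (quot_mul (quot_mul w u) (quot_inv w)) (quot_mul (quot_mul w v) (quot_inv w)).
Proof. quot_lift star_conj. Qed.

Definition quot_mla : mla :=
  Mla quot_car quot_mul quot_one quot_inv quot_star quot_mulA quot_mul1g quot_mulg1
      quot_mulVg quot_mulgV quot_star_xx quot_star_mulr quot_star_mull
      quot_star_jacobi quot_star_conj.

Lemma quot_class_hom : mla_hom T quot_mla quot_class.
Proof. split; intros x y; symmetry; [apply quot_mul_class | apply quot_star_class]. Qed.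

End Quotient.

Definition calZ_rel (T : mla) (x y : T) : Prop := calZ T (mul (inv x) y).

Section CalZRel.
Variable T : mla.

Lemma calZ_rel_refl x : calZ_rel T x x.
Proof. unfold calZ_rel. rewrite mulVg. apply calZ1. Qed.

Lemma calZ_rel_sym x y : calZ_rel T x y -> calZ_rel T y x.
Proof. unfold calZ_rel. intro H. apply calZV in H. rewrite invMg, invgK in H. exact H. Qed.

Lemma calZ_rel_trans x y z : calZ_rel T x y -> calZ_rel T y z -> calZ_rel T x z.
Proof.
  unfold calZ_rel. intros Hxy Hyz. pose proof (calZM T _ _ Hxy Hyz) as H.
  rewrite <- mulA, mulKVg in H. exact H.
Qed.

Lemma calZ_rel_mulZ x n : calZ T n -> calZ_rel T x (mul x n).
Proof. unfold calZ_rel. rewrite mulA, mulVg, mul1g. trivial. Qed.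

Lemma calZ_relP x x' : calZ_rel T x x' -> exists2 n, calZ T n & x' = mul x n.
Proof. exists (mul (inv x) x'); [assumption | symmetry; apply mulKVg]. Qed.

Lemma calZ_rel_mul x x' y y' :
  calZ_rel T x x' -> calZ_rel T y y' -> calZ_rel T (mul x y) (mul x' y').
Proof.
  intros [n Hn ->]%calZ_relP [m Hm ->]%calZ_relP.
  replace (mul (mul x n) (mul y m)) with (mul (mul x y) (mul n m)).
  - apply calZ_rel_mulZ, calZM; assumption.
  - destruct Hn as [_ Cn]. rewrite <- !mulA. f_equal. rewrite !mulA, Cn. reflexivity.
Qed.

Lemma calZ_rel_inv x x' : calZ_rel T x x' -> calZ_rel T (inv x) (inv x').
Proof.
  intros [n Hn ->]%calZ_relP. destruct (calZV T n Hn) as [Ln Cn].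
  rewrite invMg, Cn. apply calZ_rel_mulZ. split; assumption.
Qed.

Lemma calZ_rel_star x x' y y' :
  calZ_rel T x x' -> calZ_rel T y y' -> calZ_rel T (star x y) (star x' y').
Proof.
  intros [n Hn ->]%calZ_relP [m Hm ->]%calZ_relP.
  rewrite star_mulZl, star_mulZr by assumption. apply calZ_rel_refl.
Qed.

Lemma calZ_quotient : exists Q : mla, iso_quot_calZ Q T.
Proof.
  exists (quot_mla T (calZ_rel T) calZ_rel_refl calZ_rel_sym calZ_rel_trans
                   calZ_rel_mul calZ_rel_inv calZ_rel_star).
  exists (quot_class T (calZ_rel T)). split; [|split].
  - apply quot_class_hom.
  - apply quot_class_surj.
  - intro x. transitivity (calZ_rel T x one).
    + exact (quot_class_eq T _ calZ_rel_refl calZ_rel_sym calZ_rel_trans x one).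
    + unfold calZ_rel. rewrite mulg1. split; intro H.
      * rewrite <- (invgK T x). apply calZV, H.
      * apply calZV, H.
Qed.

End CalZRel.

Ltac pull_hom f :=
  repeat first [ rewrite <- (hom_conj f) | rewrite <- (hom_star f)
               | rewrite <- (hom_inv f) | rewrite <- (hom_mul f) ].

Section TensorRelations.
Variables (G M : mla) (g : G -> G -> M).
Hypothesis Hg : tensor_rels G M g.

Lemma tensor_rels_1g y : g one y = one.
Proof.
  destruct Hg as [_ [R2 _]]. pose proof (R2 one one y) as H.
  rewrite mul1g, !conj1g in H. exact (mulg_idl _ _ _ (eq_sym H)).
Qed.

Lemma tensor_rels_g1 x : g x one = one.
Proof.
  destruct Hg as [R1 _]. pose proof (R1 x one one) as H.
  rewrite mul1g, !conj1g in H. exact (mulg_idr _ _ _ (eq_sym H)).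
Qed.

Lemma tensor_rels_hom (N : mla) (f : M -> N) :
  mla_hom M N f -> tensor_rels G N (fun x y => f (g x y)).
Proof.
  intros hf. destruct Hg as [R1 [R2 [R3 [R4 R5]]]].
  repeat split; intros.
  - rewrite R1. apply (hom_mul hf).
  - rewrite R2. apply (hom_mul hf).
  - pull_hom hf. rewrite R3. apply (hom_one hf).
  - pull_hom hf. rewrite R4. apply (hom_one hf).
  - pull_hom hf. rewrite R5. reflexivity.
Qed.

Lemma tensor_rels_pullback (E : mla) (p : E -> G) :
  mla_hom E G p -> tensor_rels E M (fun a b => g (p a) (p b)).
Proof.
  intros hp. destruct Hg as [R1 [R2 [R3 [R4 R5]]]].
  repeat split; intros;
    repeat first [ rewrite (hom_conj hp) | rewrite (hom_star hp)
                 | rewrite (hom_inv hp) | rewrite (hom_mul hp) ];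
    auto.
Qed.

End TensorRelations.

Lemma tensor_rels_descend (E G M : mla) (p : E -> G) (f : E -> E -> M) (g : G -> G -> M) :
  mla_hom E G p -> (forall y, exists a, p a = y) ->
  tensor_rels E M f -> (forall a b, g (p a) (p b) = f a b) -> tensor_rels G M g.
Proof.
  intros hp p_surj [R1 [R2 [R3 [R4 R5]]]] gp.
  repeat split; intros;
    repeat match goal with
    | v : car G |- _ => destruct (p_surj v) as [? <-]; clear v
    end;
    pull_hom hp; rewrite ?gp; auto.
Qed.

Lemma tensor_rels_calZ_invariant (E M : mla) (g : E -> E -> M) :
  tensor_rels E M g -> (forall a b, calZ E a \/ calZ E b -> g a b = one) ->
  forall a a' b b', calZ_rel E a a' -> calZ_rel E b b' -> g a b = g a' b'.
Proof.
  intros [R1 [R2 _]] g_calZ a a' b b' [c Hc ->]%calZ_relP [d Hd ->]%calZ_relP.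
  rewrite R2, (conj_calZ E a c Hc), (g_calZ c) by auto.
  rewrite mul1g, R1, (conj_calZ E b d Hd), (g_calZ _ d), mulg1 by auto.
  reflexivity.
Qed.

Lemma tensor_hom_unique (G T M : mla) (t : G -> G -> T) (h1 h2 : T -> M) :
  is_tensor_square G T t -> mla_hom T M h1 -> mla_hom T M h2 ->
  (forall x y, h1 (t x y) = h2 (t x y)) -> forall z, h1 z = h2 z.
Proof.
  intros [Ht univ] hh1 hh2 h12.
  destruct (univ M (fun x y => h2 (t x y)) (tensor_rels_hom G T t Ht M h2 hh2))
    as [h [_ [_ uniq]]].
  intro z. rewrite (uniq h1), (uniq h2); auto.
Qed.

Lemma tensor_square_map (E G TE TG : mla) (p : E -> G) (tE : E -> E -> TE) (tG : G -> G -> TG) :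
  mla_hom E G p -> is_tensor_square E TE tE -> is_tensor_square G TG tG ->
  exists h : TE -> TG, mla_hom TE TG h /\ forall a b, h (tE a b) = tG (p a) (p b).
Proof.
  intros hp [_ univ] [HtG _].
  destruct (univ TG _ (tensor_rels_pullback G TG tG HtG E p hp)) as [h [hh [h_t _]]].
  exists h. auto.
Qed.

Section TensorSquareOfQuotient.
Variables (E G : mla) (p : E -> G).
Hypotheses (hp : mla_hom E G p) (p_surj : forall y, exists a, p a = y)
  (ker_p : forall a, p a = one <-> calZ E a).
Variables (TE : mla) (tE : E -> E -> TE) (TG : mla) (tG : G -> G -> TG).
Hypotheses (HTE : is_tensor_square E TE tE) (HTG : is_tensor_square G TG tG).
Hypothesis calZ_TE : forall z, calZ TE z <-> tensor_prod_sub E TE tE (calZ E) (calZ E) z.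
Variable h : TE -> TG.
Hypotheses (hh : mla_hom TE TG h) (h_t : forall a b, h (tE a b) = tG (p a) (p b)).

Lemma tensor_map_calZ z : calZ TE z -> h z = one.
Proof.
  intros Hz. apply calZ_TE in Hz.
  induction Hz as [z [a [b [-> [Ha | Hb]]]] | | x y _ IHx _ IHy | x _ IHx].
  - rewrite h_t. apply ker_p in Ha. rewrite Ha. apply tensor_rels_1g, HTG.
  - rewrite h_t. apply ker_p in Hb. rewrite Hb. apply tensor_rels_g1, HTG.
  - apply (hom_one hh).
  - rewrite (hom_mul hh), IHx, IHy. apply mulg1.
  - rewrite (hom_inv hh), IHx. apply invg1.
Qed.

Variables (Q : mla) (q : TE -> Q).
Hypotheses (hq : mla_hom TE Q q) (q_surj : forall u, exists z, q z = u)
  (ker_q : forall z, q z = one <-> calZ TE z).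

Lemma tensor_map_quotient_inverse :
  exists k : TG -> Q, mla_hom TG Q k /\ forall z, k (h z) = q z.
Proof.
  pose proof (tensor_rels_hom E TE tE (proj1 HTE) Q q hq) as relsq.
  assert (q_calZ : forall a b, calZ E a \/ calZ E b -> q (tE a b) = one).
  { intros a b Hab. apply ker_q, calZ_TE, gen_in. eauto. }
  assert (q_fib : forall a a' b b', p a = p a' -> p b = p b' -> q (tE a b) = q (tE a' b')).
  { intros a a' b b' Ha Hb.
    apply (tensor_rels_calZ_invariant E Q _ relsq q_calZ); apply ker_p; unfold calZ_rel;
      rewrite (hom_mul hp), (hom_inv hp), ?Ha, ?Hb; apply mulVg. }
  destruct (surj_factor2 p _ p_surj q_fib) as [g gp].
  pose proof (tensor_rels_descend E G Q p _ g hp p_surj relsq gp) as relsg.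
  destruct (proj2 HTG Q g relsg) as [k [hk [k_t _]]].
  exists k. split; [exact hk|].
  apply (tensor_hom_unique E TE Q tE); auto.
  - exact (hom_comp hh hk).
  - intros a b. rewrite h_t, k_t. apply gp.
Qed.

Lemma tensor_map_kernel z : h z = one -> calZ TE z.
Proof.
  intros Hz. destruct tensor_map_quotient_inverse as [k [hk kh]].
  apply ker_q. rewrite <- kh, Hz. apply (hom_one hk).
Qed.

Lemma tensor_map_surj y : exists z, h z = y.
Proof.
  destruct tensor_map_quotient_inverse as [k [hk kh]].
  assert (ker_qh : forall z, q z = one -> h z = one).
  { intros z Hz. apply tensor_map_calZ, ker_q, Hz. }
  destruct (hom_factor TE Q TG q h hq q_surj hh ker_qh) as [phi [hphi phi_q]].
  destruct (q_surj (k y)) as [z qz]. exists z.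
  rewrite <- phi_q, qz.
  apply (tensor_hom_unique G TG TG tG (fun y => phi (k y)) (fun y => y) HTG).
  - exact (hom_comp hk hphi).
  - apply hom_id.
  - intros x x'. destruct (p_surj x) as [a <-], (p_surj x') as [b <-].
    rewrite <- h_t, kh, phi_q. reflexivity.
Qed.

Lemma tensor_map_iso_quot_calZ : iso_quot_calZ TG TE.
Proof.
  exists h. split; [exact hh | split; [exact tensor_map_surj | intro z; split]].
  - apply tensor_map_kernel.
  - apply tensor_map_calZ.
Qed.

End TensorSquareOfQuotient.

Theorem proposition3p6 :
  forall (G E : mla), iso_quot_calZ G E ->
  forall (TE : mla) (tE : E -> E -> TE), is_tensor_square E TE tE ->
  (forall z : TE, calZ TE z <-> tensor_prod_sub E TE tE (calZ E) (calZ E) z) ->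
  forall (TG : mla) (tG : G -> G -> TG), is_tensor_square G TG tG ->
  lie_capable TG.
Proof.
  intros G E [p [hp [p_surj ker_p]]] TE tE HTE calZ_TE TG tG HTG.
  destruct (tensor_square_map E G TE TG p tE tG hp HTE HTG) as [h [hh h_t]].
  destruct (calZ_quotient TE) as [Q [q [hq [q_surj ker_q]]]].
  exists TE.
  exact (tensor_map_iso_quot_calZ E G p hp p_surj ker_p TE tE TG tG HTE HTG calZ_TE
           h hh h_t Q q hq q_surj ker_q).
Qed.
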